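(* Let $d\ge3$, $h\ge1$, and let $\ell$ be a leaf (a vertex at distance $h$ from the root). Then the order of $\bar{\mathbf{x}}_\ell$ in $G(d,h)$ divides $$(d-1)^h\cdot\operatorname{lcm}\{d\,\theta(d,h+1),\theta(d,h),\theta(d,h-1),\dots,\theta(d,2)\},$$ where $\theta(d,m):=\frac{(d-1)^m-1}{d-2}$.
   Context: Let $\mathcal{T}(d,h)$ be the rooted tree in which the root $0$ has $d$ children, every vertex at distance $1,\dots,h-1$ from the root has $d-1$ children, and the vertices at distance $h$ are leaves. Let $V$ be its vertex set, $A$ its adjacency matrix, $\Delta := dI-A$, and $\Lambda\subset\mathbb{Z}^V$ the lattice spanned by the rows of $\Delta$. Then $G(d,h):=\mathbb{Z}^V/\Lambda$; $\{\mathbf{x}_i:i\in V\}$ is the standard basis of $\mathbb{Z}^V$ and $\bar{\mathbf{v}}$ denotes the image of $\mathbf{v}$ in $G(d,h)$. *)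

From HB Require Import structures.
From mathcomp Require Import all_boot all_order all_algebra.
Set Implicit Arguments. Unset Strict Implicit. Unset Printing Implicit Defensive.
Import GRing.Theory Num.Theory.

(* Vertices of T(d,h) are encoded as words (paths from the root):
   the root is [::]; a word [:: a0; a1; ...; a_{k-1}] (k <= h) is the
   a_{k-1}-th child of ... of the a0-th child of the root, with a0 < d and
   a_i < d-1 for i >= 1.  The vertex at distance k from the root is a word
   of size k. *)
Definition valid_word (d h : nat) (s : seq nat) : bool :=
  (size s <= h) &&
  (if s is a :: t then (a < d) && all (fun b => b < d.-1) t else true).

Fixpoint words (d n : nat) : seq (seq nat) :=
  if n is n'.+1 then [seq a :: w | a <- iota 0 d, w <- words d n'] else [:: [::]].

Definition tree_words (d h : nat) : seq (seq nat) :=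
  [seq s <- flatten [seq words d k | k <- iota 0 h.+1] | valid_word d h s].

Definition tvert (d h : nat) : finType := seq_sub (tree_words d h).

Definition root_vertex (d h : nat) (r : tvert d h) : bool := val r == [::].

Definition tadj (d h : nat) (u v : tvert d h) : bool :=
  [exists a : 'I_d, (val v == rcons (val u) a) || (val u == rcons (val v) a)].

Definition Delta (d h : nat) (i j : tvert d h) : int :=
  (Posz d * Posz (i == j) - Posz (tadj i j))%R.

Definition zvec (d h : nat) := {ffun tvert d h -> int}.

Definition in_Lambda (d h : nat) (x : zvec d h) : Prop :=
  exists c : {ffun tvert d h -> int},
    forall j, x j = (\sum_(i : tvert d h) c i * Delta i j)%R.

Definition basis_vec (d h : nat) (i : tvert d h) : zvec d h :=
  [ffun j => Posz (i == j)].

(* n is the order of the image of x in G(d,h) = Z^V / Lambda *)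
Definition order_in_G (d h : nat) (x : zvec d h) (n : nat) : Prop :=
  0 < n /\ in_Lambda (x *+ n)%R /\
  forall k, 0 < k < n -> ~ in_Lambda (x *+ k)%R.

(* theta(d,m) = ((d-1)^m - 1)/(d-2), an exact division for d >= 3 *)
Definition theta (d m : nat) : nat := ((d.-1) ^ m - 1) %/ (d - 2).

Definition bound (d h : nat) : nat :=
  (d.-1) ^ h * lcmn (d * theta d h.+1) (\big[lcmn/1]_(2 <= m < h.+1) theta d m).

(* Write N for the bound and θ for θ(d, -).  We exhibit an integer vector c with
   c Δ = N x_ℓ, so that N x̄_ℓ = 0 and the order of x̄_ℓ divides N.  For a vertex v
   let k(v) be the depth of the meet of v and ℓ (the length of the longest common
   prefix of their words) and put
     c(v) = U_{k(v)} θ(h + 1 - |v|)      ([potential], with U = [lcp_weight]).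
   At a vertex off the root-ℓ path the row of Δ reduces to the recurrence
   d θ(m+1) = θ(m+2) + (d-1) θ(m), leaves included because θ(0) = 0.  On the path
   the rows hold once U_0 = N / (d θ(h+1) (d-1)^h) and
   U_{k+1} - U_k = N / (θ(h-k+1) θ(h-k)), and at ℓ itself the row leaves exactly
   the defect N.  These quotients are integers because consecutive θ's are coprime
   and every θ(m) with 1 <= m <= h + 1 divides the lcm in the bound. *)

From mathcomp Require Import all_boot all_order all_algebra.
From mathcomp Require Import zify ring.
From Stdlib Require Import Classical Wf_nat.
Set Implicit Arguments. Unset Strict Implicit. Unset Printing Implicit Defensive.
Import GRing.Theory.

Section Theta.
Variable d : nat.
Hypothesis d_gt2 : 2 < d.
Local Notation q := d.-1.
Local Notation theta := (theta d).

Lemma theta_sum m : theta m = \sum_(i < m) q ^ i.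
Proof. by rewrite /theta subn1 predn_exp subn2 mulKn //; lia. Qed.

Lemma theta0 : theta 0 = 0.
Proof. by rewrite /theta expn0 subnn div0n. Qed.

Lemma thetaS m : theta m.+1 = q * theta m + 1.
Proof.
rewrite !theta_sum big_ord_recl big_distrr addnC /=.
by congr (_ + _); apply: eq_bigr => i _; rewrite expnS.
Qed.

Lemma thetaSr m : theta m.+1 = theta m + q ^ m.
Proof. by rewrite !theta_sum big_ord_recr. Qed.

Lemma theta1 : theta 1 = 1.
Proof. by rewrite thetaS theta0 muln0. Qed.

Lemma theta2 : theta 2 = d.
Proof. by rewrite thetaS theta1; lia. Qed.

Lemma theta_gt0 m : 0 < m -> 0 < theta m.
Proof. by case: m => // m _; rewrite thetaS addn1. Qed.

Lemma thetaSS m : d * theta m.+1 = theta m.+2 + q * theta m.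
Proof. by rewrite !thetaS; move: (theta m) => t; nia. Qed.

Lemma coprime_thetaS m : coprime (theta m.+1) (theta m).
Proof. by rewrite coprime_sym /coprime thetaS gcdnMDl gcdn1. Qed.

End Theta.

Section Lattice.
Variables d h : nat.
Local Open Scope ring_scope.

Lemma in_LambdaB (u v : zvec d h) : in_Lambda u -> in_Lambda v -> in_Lambda (u - v).
Proof.
move=> [cu hu] [cv hv]; exists (cu - cv) => j.
by rewrite !ffunE hu hv -sumrB; apply: eq_bigr => i _; rewrite !ffunE mulrBl.
Qed.

Lemma in_LambdaMn (u : zvec d h) k : in_Lambda u -> in_Lambda (u *+ k).
Proof.
move=> [c hc]; exists (c *+ k) => j.
by rewrite ffunMnE hc -sumrMnl; apply: eq_bigr => i _; rewrite ffunMnE mulrnAl.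
Qed.

Lemma order_in_G_dvdn (x : zvec d h) N :
  (0 < N)%N -> in_Lambda (x *+ N) -> exists n, order_in_G x n /\ (n %| N)%N.
Proof.
move=> N_gt0 xN.
pose P k := (0 < k)%N /\ in_Lambda (x *+ k).
have [n [[[n_gt0 xn] n_min] _]] := dec_inh_nat_subset_has_unique_least_element
  P (fun k => classic (P k)) (ex_intro P N (conj N_gt0 xN)).
have n_le k : P k -> (n <= k)%N by move=> /n_min /leP.
exists n; split.
  do 2!split=> //; move=> k /andP [k_gt0 k_lt] xk.
  by have := n_le k (conj k_gt0 xk); rewrite leqNgt k_lt.
have x_mod : in_Lambda (x *+ (N %% n)).
  have -> : x *+ (N %% n) = x *+ N - (x *+ n) *+ (N %/ n).
    by rewrite -mulrnA {2}(divn_eq N n) mulrnDr mulnC addrAC subrr add0r.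
  by apply: in_LambdaB => //; apply: in_LambdaMn.
apply/eqP; have [//|r_gt0] := posnP (N %% n).
by have := n_le _ (conj r_gt0 x_mod); rewrite leqNgt ltn_pmod.
Qed.

End Lattice.

Definition nchildren (d : nat) (w : seq nat) : nat := if w is [::] then d else d.-1.

Section Words.
Variables d h : nat.

Lemma mem_words n s : (s \in words d n) = (size s == n) && all (fun a => a < d) s.
Proof.
elim: n s => [|n IH] s /=; first by case: s.
apply/allpairsP/idP => [[[b w] /= [b_lt w_in ->]]|].
  by move: b_lt w_in; rewrite mem_iota IH /= eqSS => b_lt /andP [-> ->]; rewrite andbT; lia.
case: s => // a s /= /and3P [s_n a_lt s_lt].
by exists (a, s); rewrite /= mem_iota IH -eqSS s_n s_lt; split=> //; lia.
Qed.

Lemma valid_word_all s : valid_word d h s -> all (fun a => a < d) s.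
Proof.
case/andP=> _; case: s => //= a t /andP [-> t_lt].
by apply: sub_all t_lt => b /= b_lt; apply: leq_trans b_lt (leq_pred d).
Qed.

Lemma mem_tree_words s : (s \in tree_words d h) = valid_word d h s.
Proof.
rewrite mem_filter andbC; case s_ok: (valid_word d h s); rewrite ?andbF // andbT.
apply/flatten_mapP; exists (size s); last by rewrite mem_words eqxx valid_word_all.
by rewrite mem_iota ltnS; case/andP: s_ok.
Qed.

Lemma valid_word_rcons w a : valid_word d h w ->
  valid_word d h (rcons w a) = (size w < h) && (a < nchildren d w).
Proof.
case: w => [|x t]; first by rewrite /valid_word /= andbT.
by rewrite /valid_word /= size_rcons all_rcons => /andP [_ /andP [-> ->]]; rewrite andbT andbC.
Qed.

Lemma valid_word_belast p b : valid_word d h (rcons p b) -> valid_word d h p /\ b < d.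
Proof.
move=> pb_ok; have := valid_word_all pb_ok; rewrite all_rcons => /andP [b_lt _].
split=> //; move: pb_ok; rewrite /valid_word size_rcons => /andP [p_lt].
case: p p_lt => [|x t] //= p_lt; rewrite all_rcons => /andP [-> /andP [_ ->]].
by rewrite andbT ltnW.
Qed.

Lemma nth_valid_word s w : valid_word d h s -> size w < size s ->
  nth 0 s (size w) < nchildren d w.
Proof.
case/andP=> _; case: s => [|x t] //= /andP [x_lt t_lt].
by case: w => //= y w w_lt; apply: (allP t_lt); apply: mem_nth.
Qed.

End Words.

Fixpoint lcp (s t : seq nat) : nat :=
  if s is x :: s' then (if t is y :: t' then (if x == y then (lcp s' t').+1 else 0) else 0)
  else 0.

Lemma lcp_le s t : lcp s t <= size s.
Proof. by elim: s t => [|x s IH] [|y t] //=; case: (x == y); rewrite // ltnS. Qed.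

Lemma lcp_refl s : lcp s s = size s.
Proof. by elim: s => //= x s ->; rewrite eqxx. Qed.

Lemma lcp_eq s t : lcp s t = size s -> size s = size t -> s = t.
Proof.
elim: s t => [|x s IH] [|y t] //=; case: eqP => // -> [st] [size_st].
by rewrite (IH t st size_st).
Qed.

Lemma lcp_rcons s a t : lcp (rcons s a) t =
  if [&& lcp s t == size s, nth 0 t (size s) == a & size s < size t]
  then (size s).+1 else lcp s t.
Proof.
elim: s t => [|x s IH] [|y t] //=; first by rewrite andbF.
  by rewrite eq_sym andbT.
by case: (x == y); rewrite //= IH eqSS ltnS; case: ifP.
Qed.

Definition tparent (d h : nat) (i j : tvert d h) : bool :=
  [exists a : 'I_d, val j == rcons (val i) a].

Section RowsOfDelta.
Variables (d h : nat) (R : nmodType).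
Local Notation V := (tvert d h).
Local Open Scope ring_scope.

Lemma sum_val_eq (s : seq nat) (F : seq nat -> R) :
  \sum_(i : V | val i == s) F (val i) = if s \in tree_words d h then F s else 0.
Proof.
case: ifP => s_in; last first.
  by rewrite big_pred0 // => i; apply/negbTE; apply: contraFN s_in => /eqP <-; apply: valP.
by rewrite (eq_bigl (pred1 (SeqSub s_in))) ?big_pred1_eq // => i; rewrite /= -(inj_eq val_inj).
Qed.

Lemma sum_Delta (f : V -> int) (j : V) :
  \sum_i f i * Delta i j = d%:Z * f j - \sum_(i | tadj i j) f i.
Proof.
rewrite /Delta; under eq_bigr => i _ do rewrite mulrBr mulrCA.
rewrite sumrB (bigD1 j) //= eqxx mulr1 big1 ?addr0; last by move=> i /negbTE ->; rewrite !mulr0.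
rewrite (big_mkcond (fun i => tadj i j)); congr (_ - _).
by apply: eq_bigr => i _; case: tadj; rewrite ?mulr1 ?mulr0.
Qed.

Lemma tadjE (i j : V) : tadj i j = tparent i j || tparent j i.
Proof.
apply/existsP/orP => [[a /orP [ji|ij]]|[/existsP [a ji]|/existsP [a ij]]].
- by left; apply/existsP; exists a.
- by right; apply/existsP; exists a.
- by exists a; rewrite ji.
- by exists a; rewrite ij orbT.
Qed.

Lemma tparent_asym (i j : V) : tparent i j -> ~~ tparent j i.
Proof.
move=> /existsP [a /eqP ji]; apply/existsP => [[b /eqP ij]].
by have := congr1 size ji; rewrite ij !size_rcons; lia.
Qed.

Lemma sum_tadj (F : seq nat -> R) (j : V) :
  \sum_(i | tadj i j) F (val i) =
  \sum_(i | tparent i j) F (val i) + \sum_(i | tparent j i) F (val i).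
Proof.
rewrite (bigID (fun i => tparent i j)) /=; congr (_ + _); apply: eq_bigl => i; rewrite tadjE.
  by rewrite andb_idl // => ->.
by apply/andP/idP => [[/orP [-> //|//]]|ji]; split; [rewrite ji orbT | apply: tparent_asym].
Qed.

Lemma sum_children (F : seq nat -> R) (j : V) :
  \sum_(i | tparent j i) F (val i) =
  \sum_(a < d | rcons (val j) a \in tree_words d h) F (rcons (val j) a).
Proof.
rewrite big_mkcond [RHS]big_mkcond; under [RHS]eq_bigr => a _ do rewrite -sum_val_eq big_mkcond.
rewrite [RHS]exchange_big /=; apply: eq_bigr => i _; rewrite /tparent.
case: existsP => [[a /eqP ija]|no_a]; last first.
  by rewrite big1 // => a _; case: eqP => // /eqP ija; case: no_a; exists a.
rewrite (bigD1 a) ?ija ?eqxx //= big1 ?addr0 // => b nba.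
by rewrite eqseq_rcons eqxx /=; case: eqP => // /val_inj ab; rewrite ab eqxx in nba.
Qed.

Lemma sum_parent_nil (F : seq nat -> R) (j : V) : val j = [::] ->
  \sum_(i | tparent i j) F (val i) = 0.
Proof.
by move=> j_nil; rewrite big_pred0 // => i; apply/existsP => [[a]]; rewrite j_nil; case: (val i).
Qed.

Lemma sum_parent_rcons (F : seq nat -> R) (j : V) p b : val j = rcons p b ->
  \sum_(i | tparent i j) F (val i) = F p.
Proof.
move=> j_pb; have [p_ok b_lt] : valid_word d h p /\ (b < d)%N.
  by apply: valid_word_belast; rewrite -j_pb -mem_tree_words; apply: valP.
rewrite (eq_bigl (fun i : V => val i == p)) ?sum_val_eq ?mem_tree_words ?p_ok // => i.
rewrite /tparent j_pb; apply/existsP/idP => [[a]|/eqP ->].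
  by rewrite eqseq_rcons eq_sym => /andP [].
by exists (Ordinal b_lt); rewrite eqseq_rcons !eqxx.
Qed.

End RowsOfDelta.

Section Potential.
Variables d h N : nat.
Hypothesis d_gt2 : 2 < d.
Hypothesis h_gt0 : 0 < h.
Hypothesis theta_dvdN : forall m, 0 < m <= h -> theta d m.+1 * theta d m %| N.
Hypothesis root_dvdN : d * theta d h.+1 * d.-1 ^ h %| N.
Variable l : tvert d h.
Hypothesis l_leaf : size (val l) = h.
Local Notation lv := (val l).
Local Notation theta := (theta d).

Definition weight_jump (m : nat) : nat := N %/ (theta m.+1 * theta m).

Definition lcp_weight (k : nat) : nat :=
  N %/ (d * theta h.+1 * d.-1 ^ h) + \sum_(i < k) weight_jump (h - i).

Definition potential (s : seq nat) : nat := lcp_weight (lcp s lv) * theta (h.+1 - size s).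

Lemma balance_off_path W m : d * (W * theta m.+1) = W * theta m.+2 + d.-1 * W * theta m.
Proof. by rewrite mulnCA thetaSS //; ring. Qed.

Lemma balance_on_path W A A' m : A' * theta m.+2 = A * theta m ->
  d * ((W + A') * theta m.+1) = W * theta m.+2 + (d.-2 * (W + A') + (W + A' + A)) * theta m.
Proof.
rewrite mulnCA thetaSS // => jumps; have -> : d.-1 = d.-2.+1 by lia.
by rewrite /= mulnDl [A' * _]mulnDr jumps; ring.
Qed.

Lemma lcp_weightS k : lcp_weight k.+1 = lcp_weight k + weight_jump (h - k).
Proof. by rewrite /lcp_weight big_ord_recr addnA. Qed.

Lemma mul_weight_jump m : 0 < m <= h -> weight_jump m * (theta m.+1 * theta m) = N.
Proof. by move=> m_in; rewrite divnK ?theta_dvdN. Qed.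

Lemma mul_lcp_weight0 : lcp_weight 0 * (d * theta h.+1 * d.-1 ^ h) = N.
Proof. by rewrite /lcp_weight big_ord0 addn0 divnK. Qed.

Lemma weight_jump_shift m : 0 < m < h ->
  weight_jump m.+1 * theta m.+2 = weight_jump m * theta m.
Proof.
move=> m_in; have th_gt0 : 0 < theta m.+1 by apply: theta_gt0.
apply/eqP; rewrite -(eqn_pmul2r th_gt0) -mulnA mul_weight_jump; last by lia.
by rewrite -[X in _ == X]mulnA [theta m * _]mulnC mul_weight_jump //; lia.
Qed.

Lemma balance_root :
  d * (lcp_weight 0 * theta h.+1) = (d.-1 * lcp_weight 0 + lcp_weight 1) * theta h.
Proof.
have th_gt0 : 0 < theta h.+1 by apply: theta_gt0.
have cancel_root : lcp_weight 0 * d * d.-1 ^ h = weight_jump h * theta h.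
  apply/eqP; rewrite -(eqn_pmul2r th_gt0) -[X in X == _]mulnA.
  rewrite -[X in _ == X]mulnA [theta h * _]mulnC mul_weight_jump ?h_gt0 ?leqnn //.
  by rewrite -mul_lcp_weight0; apply/eqP; ring.
rewrite (lcp_weightS 0) subn0 thetaSr //.
move: (lcp_weight 0) (weight_jump h) cancel_root => W A cancel_root.
have dW : d.-1 * W + W = d * W by case: (d) d_gt2 => // p _; rewrite mulSn addnC.
by rewrite addnA dW mulnDl -cancel_root; ring.
Qed.

Definition children_potential (w : seq nat) : nat :=
  \sum_(a < d | rcons w a \in tree_words d h) potential (rcons w a).

Definition children_weight (w : seq nat) : nat :=
  if lcp w lv == size w then (nchildren d w).-1 * lcp_weight (size w) + lcp_weight (size w).+1
  else nchildren d w * lcp_weight (lcp w lv).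

Lemma children_potentialE (w : seq nat) : valid_word d h w ->
  children_potential w = children_weight w * theta (h - size w).
Proof.
move=> w_ok; rewrite /children_potential.
under eq_bigl => a do rewrite mem_tree_words valid_word_rcons //.
under eq_bigr => a _ do rewrite /potential size_rcons subSS.
rewrite -big_distrl /=.
have [w_lt|w_ge] := ltnP (size w) h; last first.
  have -> : h - size w = 0 by lia.
  by rewrite theta0 !muln0.
congr (_ * _); under eq_bigl => a do rewrite andTb.
have nch_le : nchildren d w <= d by case: (w); rewrite /= ?leq_pred.
rewrite -(big_ord_widen _ (fun a => lcp_weight (lcp (rcons w a) lv)) nch_le).
under eq_bigr => a _ do rewrite lcp_rcons l_leaf w_lt andbT.
rewrite /children_weight; case: eqP => [on_path|_] /=; last first.
  by rewrite sum_nat_const card_ord.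
have a0_lt : nth 0 lv (size w) < nchildren d w.
  by apply: nth_valid_word; rewrite ?l_leaf // -mem_tree_words; apply: valP.
rewrite (bigD1 (Ordinal a0_lt)) //= eqxx addnC; congr (_ + _).
rewrite (eq_bigr (fun=> lcp_weight (size w))); last first.
  by move=> a; rewrite -(inj_eq val_inj) /= eq_sym => /negbTE ->; rewrite on_path.
by rewrite sum_nat_const cardC1 card_ord.
Qed.

Lemma potential_balance_nil : d * potential [::] = children_potential [::].
Proof.
rewrite children_potentialE /valid_word //= /potential /children_weight /= !subn0.
exact: balance_root.
Qed.

Lemma potential_balance_rcons p b : valid_word d h (rcons p b) ->
  d * potential (rcons p b) = potential p + children_potential (rcons p b) + N * (rcons p b == lv).
Proof.
move=> pb_ok; rewrite children_potentialE // /potential /children_weight size_rcons subSS.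
have p_lt : size p < h by move: pb_ok => /andP []; rewrite size_rcons.
have -> : nchildren d (rcons p b) = d.-1 by case: (p).
have lcp_pb := lcp_rcons p b lv; rewrite l_leaf p_lt andbT in lcp_pb.
have pb_lv : (rcons p b == lv) = (lcp (rcons p b) lv == (size p).+1) && ((size p).+1 == h).
  apply/eqP/andP => [pb|[/eqP pb_lcp /eqP p_h]].
    by rewrite -pb lcp_refl size_rcons eqxx -(size_rcons p b) pb l_leaf eqxx.
  by apply: lcp_eq; rewrite size_rcons ?l_leaf.
have c_le := lcp_le p lv.
rewrite pb_lv lcp_pb; set k := size p in p_lt c_le *.
have -> : h.+1 - k = (h - k.+1).+2 by lia.
have -> : h - k = (h - k.+1).+1 by lia.
case: ifP => [/andP [/eqP on_path _]|_]; last first.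
  by rewrite (ltn_eqF (c_le : _ < k.+1)) muln0 addn0 balance_off_path.
rewrite eqxx on_path (lcp_weightS k.+1) (lcp_weightS k) /=.
have [kS_lt|kS_ge] := ltnP k.+1 h.
  rewrite ltn_eqF // muln0 addn0; apply: balance_on_path => //.
  have -> : h - k = (h - k.+1).+1 by lia.
  by apply: weight_jump_shift; lia.
have -> : k.+1 == h by rewrite eqn_leq kS_ge p_lt.
have -> : h - k.+1 = 0 by lia.
have -> : h - k = 1 by lia.
have := mul_weight_jump (m := 1); rewrite theta1 // theta2 // muln1 => /(_ h_gt0) jump_N.
by rewrite theta0 -jump_N /=; ring.
Qed.

Lemma potential_laplacian (j : tvert d h) :
  ((basis_vec l *+ N) j = \sum_i Posz (potential (val i)) * Delta i j)%R.
Proof.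
have j_ok : valid_word d h (val j) by rewrite -mem_tree_words; apply: valP.
rewrite ffunMnE ffunE -mulr_natr natz -PoszM sum_Delta -(big_morph _ PoszD (erefl (Posz 0))).
rewrite sum_tadj sum_children -/(children_potential (val j)) -PoszM.
have l_j : (l == j) = (val j == lv) by rewrite -(inj_eq val_inj) eq_sym.
have j_shape : val j = [::] \/ exists p b, val j = rcons p b.
  by case: (lastP (val j)) => [|p b]; [left | right; exists p, b].
case: j_shape => [j_nil|[p [b j_pb]]].
  rewrite sum_parent_nil // l_j j_nil -potential_balance_nil.
  case: eqP => [lv_nil|_]; last by rewrite add0r subrr.
  by move: h_gt0; rewrite -l_leaf -lv_nil.
rewrite j_pb in j_ok; rewrite (sum_parent_rcons _ j_pb) l_j j_pb potential_balance_rcons //.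
by rewrite mulnC PoszD addrC addKr.
Qed.

End Potential.

Section Bound.
Variables d h : nat.
Hypothesis d_gt2 : 2 < d.
Local Notation L := (lcmn (d * theta d h.+1) (\big[lcmn/1]_(2 <= m < h.+1) theta d m)).

Lemma theta_dvd_lcm m : 0 < m <= h.+1 -> theta d m %| L.
Proof.
move=> m_in; have [m_le|m_gt] := leqP m h; last first.
  have -> : m = h.+1 by lia.
  exact: dvdn_trans (dvdn_mull d (dvdnn _)) (dvdn_lcml _ _).
have [m_eq1|m_ge2] := eqVneq m 1; first by rewrite m_eq1 theta1.
apply: dvdn_trans (dvdn_lcmr _ _).
by rewrite (bigD1_seq m) ?mem_index_iota ?iota_uniq ?dvdn_lcml //; lia.
Qed.

Lemma theta_dvd_bound m : 0 < m <= h -> theta d m.+1 * theta d m %| bound d h.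
Proof.
by move=> m_in; rewrite dvdn_mull // Gauss_dvd ?coprime_thetaS // !theta_dvd_lcm //; lia.
Qed.

Lemma root_dvd_bound : d * theta d h.+1 * d.-1 ^ h %| bound d h.
Proof. by rewrite mulnC dvdn_mul ?dvdn_lcml. Qed.

Lemma bound_gt0 : 0 < bound d h.
Proof.
have big_gt0 : 0 < \big[lcmn/1]_(2 <= m < h.+1) theta d m.
  rewrite big_seq; elim/big_ind: _ => // [x y x_gt0 y_gt0|m]; first by rewrite lcmn_gt0 x_gt0.
  by rewrite mem_index_iota => /andP [m_ge2 _]; apply: theta_gt0; lia.
by rewrite muln_gt0 expn_gt0 lcmn_gt0 big_gt0 !muln_gt0 theta_gt0 ?andbT; lia.
Qed.

End Bound.

Theorem lemma7p3 (d h : nat) (hd : 3 <= d) (hh : 1 <= h) (l : tvert d h)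
  (hl : size (val l) = h) :
  exists n : nat, order_in_G (basis_vec l) n /\ n %| bound d h.
Proof.
apply: order_in_G_dvdn; first exact: bound_gt0.
exists [ffun i => Posz (potential (bound d h) l (val i))] => j.
rewrite (potential_laplacian hd hh (theta_dvd_bound (h := h) hd) (root_dvd_bound d h) hl j).
by apply: eq_bigr => i _; rewrite ffunE.
Qed.
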